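(* Let $Q$ be a conjunctive query over $\mathcal{D}^p$ and $D^p$ an instance of $\mathcal{D}^p$ consistent w.r.t. a set $\mathcal{IC}$ of denial constraints. For each pair $\langle\vec t,[p^{\min},p^{\max}]\rangle\in Ans(Q,D^p,\mathcal{IC})$ and each $p\in[p^{\min},p^{\max}]$, there is a model $M$ of $D^p$ w.r.t. $\mathcal{IC}$ such that $\langle\vec t,p\rangle\in Ans^M(Q,D^p,\mathcal{IC})$.
   Context: A PDB instance $D^p$ of a schema $\mathcal{D}^p$ is a finite set of tuples, each with a probability $p(t)\in[0,1]$. Possible worlds are subsets of its tuples ($pwd(D^p)$); an interpretation is a probability distribution on $pwd(D^p)$ such that the total probability of worlds containing $t$ is $p(t)$. For a set $\mathcal{IC}$ of denial constraints (formulas $\forall\vec x.\neg[R_1(\vec x_1)\wedge\dots\wedge R_m(\vec x_m)\wedge\phi]$, $\phi$ a conjunction of comparisons), a model is an interpretation assigning probability $0$ to every world violating $\mathcal{IC}$; $\mathcal{M}(D^p,\mathcal{IC})$ is the set of models. A conjunctive query is $Q(\vec x)=\exists\vec z.\,R_1(\vec y_1)\wedge\dots\wedge R_m(\vec y_m)\wedge\phi(\vec y_1,\dots,\vec y_m)$ with $\phi$ a conjunction of comparisons. For a model $M$, $Ans^M(Q,D^p,\mathcal{IC})$ is the set of pairs $\langle\vec t,p^M_Q(\vec t)\rangle$ for ground tuples $\vec t$ such that $w\models Q(\vec t)$ for some $w\in pwd(D^p)$, where $p^M_Q(\vec t)=\sum_{w\in pwd(D^p),\,w\models Q(\vec t)}M(w)$.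 $Ans(Q,D^p,\mathcal{IC})$ is the set of pairs $\langle\vec t,[p^{\min},p^{\max}]\rangle$ for $\vec t$ occurring in $Ans^M$ for some model $M$, with $p^{\min}=\min_{M\in\mathcal{M}(D^p,\mathcal{IC})}p^M_Q(\vec t)$ and $p^{\max}=\max_{M\in\mathcal{M}(D^p,\mathcal{IC})}p^M_Q(\vec t)$. *)

From HB Require Import structures.
From mathcomp Require Import all_boot all_order all_algebra.
From Stdlib Require List.
From mathcomp Require Import boolp reals.
Set Implicit Arguments.
Unset Strict Implicit.
Unset Printing Implicit Defensive.
Import Order.TTheory GRing.Theory Num.Theory.
Local Open Scope ring_scope.

(* A PDB instance with n tuples is [D : 'I_n -> fact] (injective: a set of
   tuples) together with [p : 'I_n -> R]; possible worlds are [{set 'I_n}]. *)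

Section PDB.
Variables (Rel : eqType) (ar : Rel -> nat).
Variables (dC : Order.disp_t) (C : orderType dC).

Inductive term := Var of nat | Cst of C.

Definition fact := (Rel * seq C)%type.

Record atom := Atom { arel : Rel ; aargs : seq term }.

Inductive cmp_op := CEq | CNeq | CLt | CLe | CGt | CGe.

Record comparison := Cmp { cop : cmp_op ; clhs : term ; crhs : term }.

Definition eval_term (v : nat -> C) (t : term) : C :=
  match t with Var x => v x | Cst c => c end.

Definition eval_cmp (v : nat -> C) (c : comparison) : bool :=
  let a := eval_term v (clhs c) in
  let b := eval_term v (crhs c) in
  match cop c with
  | CEq => a == b
  | CNeq => a != b
  | CLt => (a < b)%O
  | CLe => (a <= b)%O
  | CGt => (b < a)%O
  | CGe => (b <= a)%O
  end.

Definition inst_atom (v : nat -> C) (a : atom) : fact :=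
  (arel a, map (eval_term v) (aargs a)).

Definition wf_atom (a : atom) : Prop := size (aargs a) = ar (arel a).

(* Denial constraint  forall x. ~ [R1(x1) /\ ... /\ Rm(xm) /\ phi] *)
Record denial := Denial { dc_atoms : seq atom ; dc_cmps : seq comparison }.

(* Conjunctive query  Q(x) = exists z. R1(y1) /\ ... /\ Rm(ym) /\ phi;
   [q_head] lists the free (answer) variables x; all other variables are
   existentially quantified. *)
Record cq := CQ { q_head : seq nat ; q_atoms : seq atom ; q_cmps : seq comparison }.

Definition wf_denial (dc : denial) : Prop :=
  forall a, List.In a (dc_atoms dc) -> wf_atom a.

Definition wf_cq (Q : cq) : Prop :=
  forall a, List.In a (q_atoms Q) -> wf_atom a.

Variable n : nat.
Variable D : 'I_n -> fact.

Definition wf_instance : Prop :=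
  injective D /\ forall i, size (D i).2 = ar (D i).1.

Definition in_world (w : {set 'I_n}) (f : fact) : Prop :=
  exists2 i, i \in w & D i = f.

Definition violates (IC : seq denial) (w : {set 'I_n}) : Prop :=
  exists2 dc, List.In dc IC &
    exists v : nat -> C,
      (forall a, List.In a (dc_atoms dc) -> in_world w (inst_atom v a)) /\
      (forall c, List.In c (dc_cmps dc) -> eval_cmp v c).

Definition sat_q (Q : cq) (w : {set 'I_n}) (t : seq C) : Prop :=
  exists v : nat -> C,
    map v (q_head Q) = t /\
    (forall a, List.In a (q_atoms Q) -> in_world w (inst_atom v a)) /\
    (forall c, List.In c (q_cmps Q) -> eval_cmp v c).

Variable R : realType.
Variable p : 'I_n -> R.

Definition probs_ok : Prop := forall i, 0 <= p i <= 1.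

Definition is_interp (M : {ffun {set 'I_n} -> R}) : Prop :=
  (forall w, 0 <= M w) /\
  \sum_(w : {set 'I_n}) M w = 1 /\
  (forall i, \sum_(w : {set 'I_n} | i \in w) M w = p i).

Definition is_model (IC : seq denial) (M : {ffun {set 'I_n} -> R}) : Prop :=
  is_interp M /\ (forall w, violates IC w -> M w = 0).

Definition consistent (IC : seq denial) : Prop :=
  exists M, is_model IC M.

Definition pQ (Q : cq) (M : {ffun {set 'I_n} -> R}) (t : seq C) : R :=
  \sum_(w : {set 'I_n} | `[< sat_q Q w t >]) M w.

Definition in_AnsM (Q : cq) (M : {ffun {set 'I_n} -> R}) (t : seq C) (q : R)
  : Prop :=
  (exists w, sat_q Q w t) /\ pQ Q M t = q.

Definition in_Ans (IC : seq denial) (Q : cq) (t : seq C) (pmin pmax : R)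
  : Prop :=
  (exists M, is_model IC M /\ exists q, in_AnsM Q M t q) /\
  ((exists M, is_model IC M /\ pQ Q M t = pmin) /\
     forall M, is_model IC M -> pmin <= pQ Q M t) /\
  ((exists M, is_model IC M /\ pQ Q M t = pmax) /\
     forall M, is_model IC M -> pQ Q M t <= pmax).

End PDB.

From HB Require Import structures.
From mathcomp Require Import all_boot all_order all_algebra.
From Stdlib Require List.
From mathcomp Require Import boolp reals.
From mathcomp Require Import ring.
Import Order.TTheory GRing.Theory Num.Theory.
Local Open Scope ring_scope.

(* The models of D^p w.r.t. IC form a convex set and M |-> p^M_Q(t) is affine,
   so the values p^M_Q(t) fill the whole interval [pmin, pmax]: a value q in it
   is attained by the mixture of a minimizing and a maximizing model. *)

Lemma between_convex_comb {R : realFieldType} {x y q : R} :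
  x <= q <= y -> exists2 a, 0 <= a <= 1 & q = a * x + (1 - a) * y.
Proof.
case/andP=> xq qy; have [eyx|nyx] := eqVneq y x.
  by exists 1; rewrite ?lexx ?ler01 // subrr mul0r addr0 mul1r;
     apply/eqP; rewrite eq_le xq -eyx qy.
have yx_gt0 : 0 < y - x.
  by rewrite subr_gt0 lt_neqAle eq_sym nyx (le_trans xq qy).
exists ((y - q) / (y - x)).
  rewrite divr_ge0 ?subr_ge0 ?(le_trans xq qy) //=.
  by rewrite ler_pdivrMr // mul1r lerD2l lerN2.
by field; rewrite gt_eqF.
Qed.

Definition mixture {T : finType} {R : pzRingType} (a : R)
    (M1 M2 : {ffun T -> R}) : {ffun T -> R} :=
  [ffun w => a * M1 w + (1 - a) * M2 w].

Lemma sum_mixture {T : finType} {R : comPzRingType} (P : pred T) (a : R)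
    (M1 M2 : {ffun T -> R}) :
  \sum_(w | P w) mixture a M1 M2 w =
  a * \sum_(w | P w) M1 w + (1 - a) * \sum_(w | P w) M2 w.
Proof.
under eq_bigr => w _ do rewrite ffunE.
by rewrite big_split /= -!mulr_sumr.
Qed.

Section Mixture.
Variables (Rel : eqType) (dC : Order.disp_t) (C : orderType dC).
Variables (n : nat) (D : 'I_n -> fact Rel C) (R : realType) (p : 'I_n -> R).

Lemma is_model_mixture (IC : seq (denial Rel C))
    (M1 M2 : {ffun {set 'I_n} -> R}) a :
  0 <= a <= 1 -> is_model D p IC M1 -> is_model D p IC M2 ->
  is_model D p IC (mixture a M1 M2).
Proof.
move=> /andP[a_ge0 a_le1] [[M1_ge0 [M1_sum M1_marg]] M1_IC].
move=> [[M2_ge0 [M2_sum M2_marg]] M2_IC].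
split; [split; [|split]|].
- by move=> w; rewrite ffunE addr_ge0 // mulr_ge0 // subr_ge0.
- by rewrite (sum_mixture xpredT) M1_sum M2_sum !mulr1 addrC subrK.
- by move=> i; rewrite sum_mixture M1_marg M2_marg -mulrDl addrC subrK mul1r.
- by move=> w Hw; rewrite ffunE M1_IC // M2_IC // !mulr0 addr0.
Qed.

Lemma pQ_mixture (Q : cq Rel C) (M1 M2 : {ffun {set 'I_n} -> R}) a t :
  pQ D Q (mixture a M1 M2) t = a * pQ D Q M1 t + (1 - a) * pQ D Q M2 t.
Proof. exact: sum_mixture. Qed.

End Mixture.

Theorem proposition2
  (Rel : eqType) (ar : Rel -> nat) (dC : Order.disp_t) (C : orderType dC)
  (n : nat) (D : 'I_n -> fact Rel C) (R : realType) (p : 'I_n -> R)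
  (IC : seq (denial Rel C)) (Q : cq Rel C)
  (HD : wf_instance ar D) (Hp : probs_ok p)
  (HIC : forall dc, List.In dc IC -> wf_denial ar dc) (HQ : wf_cq ar Q)
  (Hcons : consistent D p IC)
  (t : seq C) (pmin pmax : R)
  (Hans : in_Ans D p IC Q t pmin pmax)
  (q : R) (Hq : pmin <= q <= pmax) :
  exists M : {ffun {set 'I_n} -> R},
    is_model D p IC M /\ in_AnsM D Q M t q.
Proof.
case: Hans => [[_ [_ [_ [t_answer _]]]]].
move=> [[[Mmin [Mmin_model Mmin_val]] _] [[Mmax [Mmax_model Mmax_val]] _]].
have [a a01 ->] := between_convex_comb Hq.
exists (mixture a Mmin Mmax); split; first exact: is_model_mixture.
by split; rewrite // pQ_mixture Mmin_val Mmax_val.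
Qed.
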